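(* Let $\mathbb{K}\in\{\mathbb{R},\mathbb{C}\}$, $\mathbf{R}_U\in\mathbb{K}^{n\times n}$ self-adjoint positive definite, $U:=\mathbb{K}^n$ with $\langle\mathbf{x},\mathbf{y}\rangle_U:=\langle\mathbf{R}_U\mathbf{x},\mathbf{y}\rangle$, norm $\|\cdot\|_U$, dual norm $\|\mathbf{y}\|_{U'}:=\langle\mathbf{y},\mathbf{R}_U^{-1}\mathbf{y}\rangle^{1/2}$. Fix $\mu$, $\mathbf{A}(\mu)\in\mathbb{K}^{n\times n}$, $\mathbf{b}(\mu)\in\mathbb{K}^n$, $\mathbf{\Theta}\in\mathbb{K}^{k\times n}$, a subspace $U_r\subseteq U$, a vector $\mathbf{u}_r(\mu)\in U_r$, and $\eta(\mu)>0$ with $\eta(\mu)\le\min_{\mathbf{x}\in U\setminus\{\mathbf{0}\}}\|\mathbf{A}(\mu)\mathbf{x}\|_{U'}/\|\mathbf{x}\|_U$. Let $\mathbf{r}(\mathbf{x};\mu):=\mathbf{b}(\mu)-\mathbf{A}(\mu)\mathbf{x}$, $Y_r(\mu):=U_r+\mathrm{span}\{\mathbf{R}_U^{-1}\mathbf{r}(\mathbf{x};\mu):\mathbf{x}\in U_r\}$, $\Delta(\mathbf{u}_r(\mu);\mu):=\|\mathbf{r}(\mathbf{u}_r(\mu);\mu)\|_{U'}/\eta(\mu)$ and $\Delta^{\mathbf{\Theta}}(\mathbf{u}_r(\mu);\mu):=\|\mathbf{\Theta}\mathbf{R}_U^{-1}\mathbf{r}(\mathbf{u}_r(\mu);\mu)\|/\eta(\mu)$.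 If for some $\varepsilon\in[0,1)$, $|\langle\mathbf{x},\mathbf{y}\rangle_U-\langle\mathbf{\Theta}\mathbf{x},\mathbf{\Theta}\mathbf{y}\rangle|\le\varepsilon\|\mathbf{x}\|_U\|\mathbf{y}\|_U$ for all $\mathbf{x},\mathbf{y}\in Y_r(\mu)$, then $$\sqrt{1-\varepsilon}\,\Delta(\mathbf{u}_r(\mu);\mu)\le\Delta^{\mathbf{\Theta}}(\mathbf{u}_r(\mu);\mu)\le\sqrt{1+\varepsilon}\,\Delta(\mathbf{u}_r(\mu);\mu).$$
   Context: $\langle\mathbf{x},\mathbf{y}\rangle=\mathbf{x}^{\mathrm{H}}\mathbf{y}$ is the canonical inner product and $\|\cdot\|$ the Euclidean norm. *)

From HB Require Import structures.
From mathcomp Require Import all_boot all_order all_algebra.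
Set Implicit Arguments. Unset Strict Implicit. Unset Printing Implicit Defensive.
Import Order.TTheory GRing.Theory Num.Theory.
Local Open Scope ring_scope.

(* The scalar field K is either real (conj = id, e.g. K an rcfType) or
   complex (conj = complex conjugation ^*, K a numClosedFieldType). *)
Section Defs.
Variables (K : numFieldType) (conj : K -> K) (sq : K -> K).

Definition ip (m : nat) (x y : 'cV[K]_m) : K := \sum_(i < m) conj (x i 0) * y i 0.

Definition enorm (m : nat) (x : 'cV[K]_m) : K := sq (ip x x).

Definition adj (m p : nat) (M : 'M[K]_(m, p)) : 'M[K]_(p, m) := (map_mx conj M)^T.

Definition self_adjoint (n : nat) (M : 'M[K]_n) : Prop := adj M = M.

Definition pos_def (n : nat) (M : 'M[K]_n) : Prop :=
  forall x : 'cV[K]_n, x != 0 -> 0 < ip (M *m x) x.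

Definition ipU (n : nat) (RU : 'M[K]_n) (x y : 'cV[K]_n) : K := ip (RU *m x) y.
Definition normU (n : nat) (RU : 'M[K]_n) (x : 'cV[K]_n) : K := sq (ipU RU x x).
Definition dualnormU (n : nat) (RU : 'M[K]_n) (y : 'cV[K]_n) : K :=
  sq (ip y (invmx RU *m y)).

Definition inUr (n m : nat) (Ur : 'M[K]_(n, m)) (x : 'cV[K]_n) : Prop :=
  exists c : 'cV[K]_m, x = Ur *m c.

Definition resid (n : nat) (A : 'M[K]_n) (b x : 'cV[K]_n) : 'cV[K]_n := b - A *m x.

Definition inYr (n m : nat) (RU A : 'M[K]_n) (b : 'cV[K]_n) (Ur : 'M[K]_(n, m))
    (y : 'cV[K]_n) : Prop :=
  exists (p : nat) (u : 'cV[K]_n) (xs : 'I_p -> 'cV[K]_n) (c : 'I_p -> K),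
    [/\ inUr Ur u, (forall j, inUr Ur (xs j)) &
        y = u + \sum_(j < p) c j *: (invmx RU *m resid A b (xs j))].

Definition Delta (n : nat) (RU A : 'M[K]_n) (b ur : 'cV[K]_n) (eta : K) : K :=
  dualnormU RU (resid A b ur) / eta.
Definition DeltaTheta (n k : nat) (RU A : 'M[K]_n) (Theta : 'M[K]_(k, n))
    (b ur : 'cV[K]_n) (eta : K) : K :=
  enorm (Theta *m (invmx RU *m resid A b ur)) / eta.

Definition cor45_statement : Prop :=
  forall (n k m : nat) (RU : 'M[K]_n) (A : 'M[K]_n) (b : 'cV[K]_n)
         (Theta : 'M[K]_(k, n)) (Ur : 'M[K]_(n, m)) (ur : 'cV[K]_n)
         (eta eps : K),
    self_adjoint RU -> pos_def RU ->
    inUr Ur ur ->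
    0 < eta ->
    (forall x : 'cV[K]_n, x != 0 -> eta <= dualnormU RU (A *m x) / normU RU x) ->
    0 <= eps -> eps < 1 ->
    (forall x y : 'cV[K]_n, inYr RU A b Ur x -> inYr RU A b Ur y ->
       `| ipU RU x y - ip (Theta *m x) (Theta *m y) |
         <= eps * normU RU x * normU RU y) ->
    sq (1 - eps) * Delta RU A b ur eta <= DeltaTheta RU A Theta b ur eta
    /\ DeltaTheta RU A Theta b ur eta <= sq (1 + eps) * Delta RU A b ur eta.

End Defs.

From HB Require Import structures.
From mathcomp Require Import all_boot all_order all_algebra.
Import Order.TTheory GRing.Theory Num.Theory.
Local Open Scope ring_scope.

(* The Riesz representative y := R_U^{-1} r(u_r) of the residual lies in Y_r,
   and ||r(u_r)||_{U'} = ||y||_U.  The embedding hypothesis applied to the pair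
   (y, y) reads | ||y||_U^2 - ||Theta y||^2 | <= eps ||y||_U^2; taking square
   roots and dividing by eta gives both bounds. *)

Section Estimators.
Variables (K : numFieldType) (conj : K -> K) (sq : K -> K).
Hypothesis conj0 : conj 0 = 0.
Hypothesis conj_mul_ge0 : forall z, 0 <= conj z * z.
Hypothesis sqK : forall a, 0 <= a -> sq a * sq a = a.
Hypothesis sqM : forall a b, 0 <= a -> 0 <= b -> sq (a * b) = sq a * sq b.
Hypothesis ler_sq : forall a b, 0 <= a -> a <= b -> sq a <= sq b.

Lemma ip0l m (x : 'cV[K]_m) : ip conj 0 x = 0.
Proof. by rewrite /ip big1 // => i _; rewrite mxE conj0 mul0r. Qed.

Lemma ip_ge0 m (x : 'cV[K]_m) : 0 <= ip conj x x.
Proof. by rewrite /ip; apply: sumr_ge0 => i _. Qed.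

Lemma pos_def_unitmx n (RU : 'M[K]_n) : pos_def conj RU -> RU \in unitmx.
Proof.
move=> pdRU; rewrite unitmxE unitfE -det_tr; apply/negP => /det0P [w w0 wRU].
have wT0 : w^T != 0 by apply: contra w0 => /eqP wT0; rewrite -(trmxK w) wT0 trmx0.
by have := pdRU _ wT0; rewrite -(trmxK RU) -trmx_mul wRU trmx0 ip0l ltxx.
Qed.

Lemma pos_def_ipU_ge0 n (RU : 'M[K]_n) (x : 'cV[K]_n) :
  pos_def conj RU -> 0 <= ipU conj RU x x.
Proof.
move=> pdRU; have [->|x0] := eqVneq x 0; first by rewrite /ipU mulmx0 ip0l.
exact/ltW/pdRU.
Qed.

Lemma dualnormU_riesz n (RU : 'M[K]_n) (r : 'cV[K]_n) : RU \in unitmx ->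
  dualnormU conj sq RU r = normU conj sq RU (invmx RU *m r).
Proof. by move=> RUu; rewrite /normU /ipU mulmxA mulmxV // mul1mx. Qed.

Lemma inYr_riesz_resid n m (RU A : 'M[K]_n) (b ur : 'cV[K]_n)
    (Ur : 'M[K]_(n, m)) :
  inUr Ur ur -> inYr RU A b Ur (invmx RU *m resid A b ur).
Proof.
move=> Ur_ur; exists 1%N, 0, (fun=> ur), (fun=> 1); split=> //.
  by exists 0; rewrite mulmx0.
by rewrite big_ord1 scale1r add0r.
Qed.

Lemma sq_perturb_bounds (eps a c : K) :
  0 <= eps -> eps <= 1 -> 0 <= a -> 0 <= c -> `|a - c| <= eps * a ->
  sq (1 - eps) * sq a <= sq c /\ sq c <= sq (1 + eps) * sq a.
Proof.
move=> eps0 eps1 a0 c0; rewrite real_ler_norml ?rpredB ?ger0_real //.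
move=> /andP [lo up].
rewrite -!sqM ?subr_ge0 ?addr_ge0 //; split; apply: ler_sq => //.
- by rewrite mulr_ge0 ?subr_ge0.
- by rewrite mulrBl mul1r lerBlDr addrC -lerBlDr.
- by rewrite mulrDl mul1r addrC -lerBlDr -opprB lerNl.
Qed.

Lemma estimators_equivalent : cor45_statement conj sq.
Proof.
move=> n k m RU A b Theta Ur ur eta eps _ pdRU Ur_ur eta0 _ eps0 eps1 embed.
set y := invmx RU *m resid A b ur.
have Yr_y : inYr RU A b Ur y by exact: inYr_riesz_resid.
have := embed y y Yr_y Yr_y; rewrite /normU -mulrA sqK ?pos_def_ipU_ge0 //.
move=> /sq_perturb_bounds [] //; first exact: ltW.
- exact: pos_def_ipU_ge0.
- exact: ip_ge0.
rewrite /Delta /DeltaTheta /enorm dualnormU_riesz ?pos_def_unitmx // -/y.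
by move=> lo up; rewrite !mulrA; split; rewrite ler_pM2r ?invr_gt0.
Qed.

End Estimators.

Theorem corollary4p5 :
  (forall R : rcfType, cor45_statement (K:=R) id Num.sqrt) /\
  (forall C : numClosedFieldType, cor45_statement (K:=C) Num.conj (2.-root)).
Proof.
split=> F; apply: estimators_equivalent => //.
- by move=> z; rewrite /id -expr2 sqr_ge0.
- by move=> a a0; rewrite -expr2 sqr_sqrtr.
- by move=> a c a0 c0; rewrite sqrtrM.
- by move=> a c a0 ac; rewrite ler_sqrt // (le_trans a0).
- by rewrite conjC0.
- by move=> z; rewrite mulrC mul_conjC_ge0.
- by move=> a a0; rewrite -expr2 rootCK.
- by move=> a c a0 c0; rewrite rootCMl.
- by move=> a c a0 ac; rewrite ler_rootC // qualifE /= ?(le_trans a0).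
Qed.
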